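(* Let $\mu$ be a Borel measure on $\mathbb R$ with $\mu(\mathbb R)=1$, and let $f$ be Lipschitz continuous with $f(0)=f(\alpha)=f(1)=0$, $f<0$ on $(0,\alpha)$, $f>0$ on $(\alpha,1)$ for some $\alpha\in(0,1)$. Let $\hat f$ be a Lipschitz continuous function on $\mathbb R$ with $\hat f>0$ on $(-\infty,0)$, $\hat f=f$ on $[0,1]$, $\hat f<0$ on $(1,+\infty)$. Let $\rho\in C^1(\mathbb R)$ satisfy $\rho=0$ on $(-\infty,0]$, $\rho=1$ on $[1,+\infty)$ and $\rho'>0$ on $(0,1)$. Then for every sufficiently small constant $\varepsilon>0$, the function $\underline u(t,x):=\rho(\varepsilon x-\frac{t}{\varepsilon})-\frac{1-\alpha}{4}$ is a sub-solution and the function $\overline u(t,x):=\rho(\varepsilon x+\frac{t}{\varepsilon}+1)+\frac{\alpha}{4}$ is a super-solution of \[u_t=\mu*u-u+\hat f(u).\]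
   Context: $(\mu*u)(x)=\int_{y\in\mathbb R}u(x-y)\,d\mu(y)$. A sub-solution (resp. super-solution) is a function $u(t,x)$ satisfying $u_t\le\mu*u-u+\hat f(u)$ (resp. $u_t\ge\mu*u-u+\hat f(u)$) for all $t,x\in\mathbb R$. *)

From HB Require Import structures.
From mathcomp Require Import all_boot all_order all_algebra.
From mathcomp Require Import all_classical all_reals all_analysis.
Set Implicit Arguments. Unset Strict Implicit. Unset Printing Implicit Defensive.
Import Order.TTheory GRing.Theory Num.Theory.
Import numFieldNormedType.Exports.
Local Open Scope classical_set_scope.
Local Open Scope ring_scope.

Definition lipschitz_on_set (R : realType) (A : set R) (g : R -> R) : Prop :=
  exists k : R, forall x y, A x -> A y -> `|g x - g y| <= k * `|x - y|.

Definition conv (R : realType) (mu : {measure set R -> \bar R}) (v : R -> R) (x : R) : R :=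
  Rintegral mu setT (fun y => v (x - y)).

Definition nl_rhs (R : realType) (mu : {measure set R -> \bar R}) (fh : R -> R)
  (u : R -> R -> R) (t x : R) : R :=
  conv mu (u t) x - u t x + fh (u t x).

Definition subsolution (R : realType) (mu : {measure set R -> \bar R}) (fh : R -> R)
  (u : R -> R -> R) : Prop :=
  forall t x, derivable (fun s => u s x) t 1 /\
    derive1 (fun s => u s x) t <= nl_rhs mu fh u t x.

Definition supersolution (R : realType) (mu : {measure set R -> \bar R}) (fh : R -> R)
  (u : R -> R -> R) : Prop :=
  forall t x, derivable (fun s => u s x) t 1 /\
    derive1 (fun s => u s x) t >= nl_rhs mu fh u t x.

From Pilot Require Import Defs.
From HB Require Import structures.
From mathcomp Require Import all_boot all_order all_algebra.
From mathcomp Require Import all_classical all_reals all_analysis.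
From mathcomp Require Import lra.
Import Order.TTheory GRing.Theory Num.Theory.
Import numFieldNormedType.Exports.
Local Open Scope classical_set_scope.
Local Open Scope ring_scope.
Set Implicit Arguments.
Unset Strict Implicit.
Unset Printing Implicit Defensive.

(* Both functions are fronts rho(z) + const with z = eps x -+ t/eps + c, so u_t = -+rho'(z)/eps
   and mu*u - u = \int rho(z - eps y) dmu(y) - rho(z).  As rho is bounded and Lipschitz and mu is
   a probability measure, this convolution defect tends to 0 uniformly in z when eps -> 0.  The
   reaction term wins against it: with phi(v) = fh(v - (1-alpha)/4), resp. -fh(v + alpha/4), the
   sign conditions on fh make phi(rho) > 0 where rho = 0 or 1, so by compactness of [0,1] either
   rho' or phi(rho) is at least some m > 0 at every point; as phi(rho) is bounded and rho' >= 0,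
   rho'(z)/eps + phi(rho z) >= m once eps is small. *)

Lemma lipschitz_continuous (R : realType) (g : R -> R) (k : R) :
  (forall x y, `|g x - g y| <= k * `|x - y|) -> continuous g.
Proof.
move=> gk x; apply/cvgrPdist_le => e e0.
have k1 : 0 < `|k| + 1 by rewrite ltr_wpDl.
apply/nbhs_ballP; exists (e / (`|k| + 1)); first by rewrite /= divr_gt0.
move=> y; rewrite /ball /= => xy.
apply: le_trans (gk x y) _.
apply: le_trans (ler_wpM2r (normr_ge0 _) (ler_norm k)) _.
apply: (@le_trans _ _ ((`|k| + 1) * `|x - y|)).
  by apply: ler_wpM2r => //; rewrite lerDl.
by rewrite mulrC -ler_pdivlMr // ltW.
Qed.

Lemma derive1_near_cst (R : realType) (g : R -> R) (z c : R) :
  (\forall y \near z, g y = c) -> derive1 g z = 0.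
Proof.
by move=> gc; rewrite derive1E (@near_eq_derive _ _ _ _ (cst c)) ?derive_val.
Qed.

Lemma continuous_cst_left (R : realType) (g : R -> R) (a c : R) :
  {for a, continuous g} -> (forall x, x < a -> g x = c) -> g a = c.
Proof.
move=> ga gc.
have gl : g x @[x --> a^'-] --> g a := cvg_at_left_filter ga.
have cl : g x @[x --> a^'-] --> c.
  by apply: cvg_near_cst; near=> x; apply: gc; near: x; exact: nbhs_left_lt.
exact: cvg_unique gl cl.
Unshelve. all: by end_near.
Qed.

Lemma continuous_cst_right (R : realType) (g : R -> R) (b c : R) :
  {for b, continuous g} -> (forall x, b < x -> g x = c) -> g b = c.
Proof.
move=> gb gc.
have gr : g x @[x --> b^'+] --> g b := cvg_at_right_filter gb.
have cr : g x @[x --> b^'+] --> c.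
  by apply: cvg_near_cst; near=> x; apply: gc; near: x; exact: nbhs_right_gt.
exact: cvg_unique gr cr.
Unshelve. all: by end_near.
Qed.

Lemma continuous_bounded_cst_outside (R : realType) (g : R -> R) (a b : R) :
  a <= b -> continuous g ->
  (forall x, x < a -> g x = g a) -> (forall x, b < x -> g x = g b) ->
  exists M, forall x, `|g x| <= M.
Proof.
move=> ab gc ga gb.
have [c _ gc_max] : exists2 c, c \in `[a, b] &
    forall x, x \in `[a, b] -> `|g x| <= `|g c|.
  apply: EVT_max => //; apply: continuous_subspaceT => x.
  exact: continuous_comp (gc x) (@norm_continuous _ R _).
have [aa bb] : a \in `[a, b] /\ b \in `[a, b] by rewrite !in_itv /= !lexx ab.
exists `|g c| => x; have [xa|ax] := ltP x a; first by rewrite ga // gc_max.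
have [bx|xb] := ltP b x; first by rewrite gb // gc_max.
by apply: gc_max; rewrite in_itv /= ax xb.
Qed.

Lemma continuous_shift (R : realType) (g : R -> R) (c : R) :
  continuous g -> continuous (fun v => g (v + c)).
Proof.
move=> gc v; apply: (@continuous_comp _ _ _ (fun v => v + c) g); last exact: gc.
by apply: cvgD; [exact: cvg_id | exact: cvg_cst].
Qed.

Lemma continuous_dilation (R : realType) (g : R -> R) (z eps : R) :
  continuous g -> continuous (fun y => g (z - eps * y)).
Proof.
move=> gc y; apply: (@continuous_comp _ _ _ (fun y => z - eps * y) g); last exact: gc.
by apply: cvgB; [exact: cvg_cst | apply: cvgMr; exact: cvg_id].
Qed.

Lemma derive1_affine_comp (R : realType) (g : R -> R) (k c a t : R) :
  derivable g (k * t + c) 1 ->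
  derivable (fun s => g (k * s + c) + a) t 1 /\
  derive1 (fun s => g (k * s + c) + a) t = k * derive1 g (k * t + c).
Proof.
move=> gd.
have -> : (fun s => g (k * s + c) + a) = g \o (k \*: id + cst c) + cst a by apply/funext.
have affine : is_derive t 1 (k \*: id + cst c) (k *: 1 + 0) by apply: is_deriveD.
have outer : is_derive ((k \*: id + cst c) t) 1 g (derive1 g (k * t + c)).
  by rewrite derive1E; exact: derivableP.
have sum := is_deriveD (is_derive1_comp outer affine) (is_derive_cst a t 1).
split; first exact: (@ex_derive _ _ _ _ _ _ _ sum).
by rewrite derive1E (@derive_val _ _ _ _ _ _ _ sum) /= !addr0 mulrC -[k%:A]/(k * 1) mulr1.
Qed.

Section ProbabilityMeasure.
Variables (R : realType) (mu : {measure set R -> \bar R}).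
Hypothesis mu1 : mu setT = 1%E.

Lemma probability_le1 (A : set R) : measurable A -> (mu A <= 1)%E.
Proof. by move=> mA; rewrite -mu1 le_measure ?inE. Qed.

Lemma probability_fin_num (A : set R) : measurable A -> mu A \is a fin_num.
Proof.
move=> mA; rewrite ge0_fin_numE //.
exact: le_lt_trans (probability_le1 mA) (ltry _).
Qed.

Lemma fine_probability_le1 (A : set R) : measurable A -> fine (mu A) <= 1.
Proof. by move=> mA; exact: fine_le (probability_fin_num mA) _ (probability_le1 mA). Qed.

Lemma integrable_bounded_continuous (A : set R) (g : R -> R) (M : R) :
  measurable A -> continuous g -> (forall y, `|g y| <= M) ->
  mu.-integrable A (EFin \o g).
Proof.
move=> mA gc gM; apply: measurable_bounded_integrable => //.
- by rewrite -ge0_fin_numE //; exact: probability_fin_num.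
- exact: measurable_funS (measurable_realfun.continuous_measurable_fun gc).
- rewrite /bounded_near; near=> K => x _; apply: le_trans (gM x) _.
  by near: K; apply: nbhs_pinfty_ge; exact: num_real.
Unshelve. all: by end_near.
Qed.

Lemma Rintegral_addr_cst (g : R -> R) (c : R) :
  mu.-integrable setT (EFin \o g) ->
  Rintegral mu setT (fun y => g y + c) = Rintegral mu setT g + c.
Proof.
move=> ig; rewrite (RintegralD (f2 := cst c)) // ?Rintegral_cst // ?mu1 ?mulr1 //.
exact: integrable_bounded_continuous measurableT (@cst_continuous _ _ c) (fun=> lexx _).
Qed.

Lemma probability_tail_small (d : R) :
  0 < d -> exists n : nat, fine (mu (~` `[- n%:R, n%:R]%classic)) <= d.
Proof.
move=> d0; pose K n : set R := `[- n%:R, n%:R]%classic.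
have mK n : measurable (K n) by exact: measurable_itv.
have K_nondecreasing : {homo K : n m / (n <= m)%N >-> (n <= m)%O}.
  move=> n m nm; apply/subsetPset => x; rewrite /K /= !in_itv /= => /andP[a b].
  have nm' : (n%:R <= m%:R :> R) by rewrite ler_nat.
  by rewrite (le_trans _ a) ?(le_trans b) // lerN2.
have K_cover : \bigcup_n K n = setT.
  apply/seteqP; split => // x _; exists (Num.Def.archi_bound `|x|) => //.
  have /ltW := archi_boundP (normr_ge0 x).
  by rewrite /K /= in_itv /= -ler_norml.
have := @nondecreasing_cvg_mu _ R R mu K mK (bigcup_measurable (fun n _ => mK n))
  K_nondecreasing.
rewrite K_cover mu1 => /fine_cvgP[_ /cvgr_gt/(_ (1 - d))].
rewrite ltrBlDr ltrDl => /(_ d0)[N _ /(_ N (leqnn N)) /= KN].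
exists N; have : (mu (K N) + mu (~` K N))%E = 1%E.
  by rewrite -measureU ?setUCr ?setICr //; exact: measurableC.
move/(congr1 fine); rewrite fineD ?probability_fin_num //=; last exact: measurableC.
lra.
Qed.

Lemma Rintegral_dilation_dist (g : R -> R) (L B : R) (n : nat) (eps z : R) :
  (forall a b, `|g a - g b| <= L * `|a - b|) -> (forall a, `|g a| <= B) ->
  0 <= L -> 0 <= eps ->
  `|Rintegral mu setT (fun y => g (z - eps * y)) - g z|
    <= L * eps * n%:R + 2 * B * fine (mu (~` `[- n%:R, n%:R]%classic)).
Proof.
move=> glip gB L0 eps0; set K : set R := `[- n%:R, n%:R]%classic.
have mK : measurable K by exact: measurable_itv.
set h := fun y => g (z - eps * y) - g z.
have gzc := @continuous_dilation _ _ z eps (lipschitz_continuous glip).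
have hc : continuous h by move=> y; apply: cvgB (gzc y) (cvg_cst _).
have hB y : `|h y| <= 2 * B.
  by rewrite mulr2n mulrDl mul1r; apply: le_trans (ler_normB _ _) (lerD _ _).
have ih A : measurable A -> mu.-integrable A (EFin \o h).
  by move=> mA; exact: integrable_bounded_continuous mA hc hB.
have iabsh A : measurable A -> mu.-integrable A (EFin \o (fun y => `|h y|)).
  move=> mA; apply: integrable_bounded_continuous mA (fun y => cvg_norm (hc y)) _.
  by move=> y; rewrite normr_id.
have icst c A : measurable A -> mu.-integrable A (EFin \o cst c).
  by move=> mA; exact: integrable_bounded_continuous mA (@cst_continuous _ _ c) (fun=> lexx _).
have -> : Rintegral mu setT (fun y => g (z - eps * y)) - g z = Rintegral mu setT h.
  rewrite -Rintegral_addr_cst //.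
  exact: integrable_bounded_continuous measurableT gzc (fun y => gB _).
apply: le_trans (le_normr_Rintegral _ (ih _ _)) _ => //.
have mKc := measurableC mK.
rewrite -(setUCr K) Rintegral_setU ?setUCr ?iabsh //; last by rewrite /disj_set setICr.
apply: lerD.
- apply: le_trans
    (le_Rintegral (f2 := cst (L * eps * n%:R)) mK (iabsh _ mK) (icst _ _ mK) _) _.
    move=> y; rewrite /K /= in_itv /= -ler_norml => yn.
    rewrite /h; apply: le_trans (glip _ _) _.
    rewrite addrAC subrr add0r normrN normrM (ger0_norm eps0) mulrA.
    by apply: ler_wpM2l => //; rewrite mulr_ge0.
  rewrite Rintegral_cst // ler_piMr ?fine_probability_le1 //.
  by rewrite !mulr_ge0.
- apply: le_trans (le_Rintegral (f2 := cst (2 * B)) mKc (iabsh _ mKc) (icst _ _ mKc) _) _.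
    by move=> y _; exact: hB.
  by rewrite Rintegral_cst.
Qed.

Lemma Rintegral_dilation_near (g : R -> R) (L B m : R) :
  (forall a b, `|g a - g b| <= L * `|a - b|) -> (forall a, `|g a| <= B) ->
  0 <= L -> 0 < m ->
  exists2 delta, 0 < delta & forall eps, 0 <= eps -> eps < delta ->
    forall z, `|Rintegral mu setT (fun y => g (z - eps * y)) - g z| <= m.
Proof.
move=> glip gB L0 m0; have B0 : 0 <= B := le_trans (normr_ge0 _) (gB 0).
have B4 : 0 < 4 * (B + 1) by rewrite mulr_gt0 // ltr_wpDl.
have [n tail] := probability_tail_small (divr_gt0 m0 B4).
have Ln : 0 < 2 * (L * n%:R + 1) by rewrite mulr_gt0 // ltr_wpDl // mulr_ge0.
exists (m / (2 * (L * n%:R + 1))) => [|eps eps0 epsd z]; first exact: divr_gt0.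
apply: le_trans (Rintegral_dilation_dist n z glip gB L0 eps0) _.
move: epsd tail; rewrite !ltr_pdivlMr // !ler_pdivlMr //.
have := fine_ge0 (measure_ge0 mu (~` `[- n%:R, n%:R]%classic)).
have : 0 <= n%:R :> R by [].
nra.
Qed.

End ProbabilityMeasure.

Definition front (R : realType) (rho : R -> R) (eps k c a : R) (t x : R) : R :=
  rho (eps * x + k * t + c) + a.

Section TransitionProfile.
Variables (R : realType) (rho : R -> R).
Hypothesis rho_derivable : forall x, derivable rho x 1.
Hypothesis rho'_continuous : continuous (derive1 rho).
Hypothesis rho_le0 : forall x, x <= 0 -> rho x = 0.
Hypothesis rho_ge1 : forall x, 1 <= x -> rho x = 1.
Hypothesis rho'_gt0 : forall x, 0 < x < 1 -> 0 < derive1 rho x.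

Lemma rho_continuous : continuous rho.
Proof.
by move=> x; apply: differentiable_continuous; exact/derivable1_diffP.
Qed.

Lemma derive1_rho_le0 z : z <= 0 -> derive1 rho z = 0.
Proof.
have lt0 x : x < 0 -> derive1 rho x = 0.
  move=> x0; apply: derive1_near_cst; near=> y; apply: rho_le0.
  by near: y; exact: lt_le_nbhsl.
rewrite le_eqVlt => /predU1P[->|]; last exact: lt0.
exact: continuous_cst_left (@rho'_continuous 0) lt0.
Unshelve. all: by end_near.
Qed.

Lemma derive1_rho_ge1 z : 1 <= z -> derive1 rho z = 0.
Proof.
have gt1 x : 1 < x -> derive1 rho x = 0.
  move=> x1; apply: derive1_near_cst; near=> y; apply: rho_ge1.
  by near: y; exact: lt_le_nbhsr.
rewrite le_eqVlt => /predU1P[<-|]; last exact: gt1.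
exact: continuous_cst_right (@rho'_continuous 1) gt1.
Unshelve. all: by end_near.
Qed.

Lemma derive1_rho_ge0 z : 0 <= derive1 rho z.
Proof.
have [z0|z0] := leP z 0; first by rewrite derive1_rho_le0.
have [z1|z1] := leP 1 z; first by rewrite derive1_rho_ge1.
by apply/ltW/rho'_gt0; rewrite z0 z1.
Qed.

Lemma rho_bounded : exists B, forall x, `|rho x| <= B.
Proof.
apply: (continuous_bounded_cst_outside ler01 rho_continuous) => x x01.
  by rewrite !rho_le0 // ltW.
by rewrite !rho_ge1 // ltW.
Qed.

Lemma rho_lipschitz :
  exists2 L, 0 <= L & forall a b, `|rho a - rho b| <= L * `|a - b|.
Proof.
have [L rho'L] : exists L, forall x, `|derive1 rho x| <= L.
  apply: (continuous_bounded_cst_outside ler01 rho'_continuous) => x x01.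
    by rewrite !derive1_rho_le0 // ltW.
  by rewrite !derive1_rho_ge1 // ltW.
exists L => [|a b]; first exact: le_trans (normr_ge0 _) (rho'L 0).
wlog ab : a b / a < b.
  move=> W; have [/W//|ba|->] := ltgtP a b; last by rewrite !subrr normr0 mulr0.
  by rewrite distrC (distrC a); exact: W.
have rho_is_derive (x : R) : is_derive x 1 rho (derive1 rho x).
  by rewrite derive1E; exact: derivableP.
have [c _ rho_ba] := MVT ab (fun x _ => rho_is_derive x)
  (continuous_subspaceT rho_continuous).
by rewrite distrC (distrC a) rho_ba normrM ler_wpM2r.
Qed.

Variable mu : {measure set R -> \bar R}.
Hypothesis mu1 : mu setT = 1%E.

Section Drift.
Variable phi : R -> R.
Hypothesis phi_continuous : continuous phi.
Hypothesis phi_rho0_gt0 : 0 < phi (rho 0).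
Hypothesis phi_rho1_gt0 : 0 < phi (rho 1).

Let phi_rho_continuous : continuous (phi \o rho).
Proof.
by move=> x; apply: continuous_comp; [exact: rho_continuous | exact: phi_continuous].
Qed.

Lemma rho_drift_dichotomy :
  exists2 m, 0 < m & forall z, m <= derive1 rho z \/ m <= phi (rho z).
Proof.
pose F := derive1 rho \max (phi \o rho).
have [c c01 F_min] :
    exists2 c, c \in `[0, 1] & forall z, z \in `[0, 1] -> F c <= F z.
  apply: EVT_min => //; apply: continuous_subspaceT.
  exact: max_fun_continuous rho'_continuous phi_rho_continuous.
have Fc_gt0 : 0 < F c.
  rewrite /F /= lt_max; move: c01; rewrite in_itv /= => /andP[].
  rewrite le_eqVlt => /predU1P[<- _|c0]; first by rewrite phi_rho0_gt0 orbT.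
  rewrite le_eqVlt => /predU1P[->|c1]; first by rewrite phi_rho1_gt0 orbT.
  by rewrite rho'_gt0 // c0 c1.
exists (Num.min (F c) (Num.min (phi (rho 0)) (phi (rho 1)))) => [|z].
  by rewrite !lt_min Fc_gt0 phi_rho0_gt0 phi_rho1_gt0.
have [z0|z0] := ltP z 0.
  have -> : rho z = rho 0 by rewrite !rho_le0 // ltW.
  by right; rewrite !ge_min lexx !orbT.
have [z1|z1] := ltP 1 z.
  have -> : rho z = rho 1 by rewrite !rho_ge1 // ltW.
  by right; rewrite !ge_min lexx !orbT.
have : Num.min (F c) (Num.min (phi (rho 0)) (phi (rho 1))) <= F z.
  by rewrite ge_min F_min ?orTb // in_itv /= z0 z1.
by rewrite /F /= le_max => /orP[]; [left | right].
Qed.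

Lemma rho_drift_lower_bound :
  exists2 m, 0 < m & exists2 e, 0 < e & forall eps, 0 < eps -> eps <= e ->
    forall z, m <= derive1 rho z / eps + phi (rho z).
Proof.
have [m m0 dichotomy] := rho_drift_dichotomy.
have [M phi_rhoM] : exists M, forall z, `|phi (rho z)| <= M.
  apply: (continuous_bounded_cst_outside ler01 phi_rho_continuous) => x x01 /=.
    by rewrite !rho_le0 // ltW.
  by rewrite !rho_ge1 // ltW.
have M0 : 0 <= M := le_trans (normr_ge0 _) (phi_rhoM 0).
have Mm : 0 < M + m by rewrite ltr_wpDl.
exists m => //; exists (m / (M + m)) => [|eps eps0 epse z]; first exact: divr_gt0.
have := phi_rhoM z; rewrite ler_norml => /andP[phi_lb _].
have [m_rho'|m_phi] := dichotomy z.
- have : M + m <= derive1 rho z / eps.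
    rewrite ler_pdivlMr //; apply: le_trans m_rho'.
    by rewrite mulrC -ler_pdivlMr.
  lra.
- have : 0 <= derive1 rho z / eps by rewrite divr_ge0 ?derive1_rho_ge0 // ltW.
  lra.
Qed.

Lemma conv_defect_le_drift :
  exists2 e, 0 < e & forall eps, 0 < eps -> eps < e -> forall z,
    `|Rintegral mu setT (fun y => rho (z - eps * y)) - rho z|
      <= derive1 rho z / eps + phi (rho z).
Proof.
have [m m0 [e1 e1_gt0 drift]] := rho_drift_lower_bound.
have [L L0 rhoL] := rho_lipschitz.
have [B rhoB] := rho_bounded.
have [delta delta_gt0 conv_near] := Rintegral_dilation_near mu1 rhoL rhoB L0 m0.
exists (Num.min e1 delta) => [|eps eps0]; first by rewrite lt_min e1_gt0 delta_gt0.
rewrite lt_min => /andP[eps_e1 eps_delta] z.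
exact: le_trans (conv_near _ (ltW eps0) eps_delta z) (drift _ eps0 (ltW eps_e1) z).
Qed.

End Drift.

Variable fh : R -> R.

Lemma derive1_front eps k c a t x :
  derivable (fun s => front rho eps k c a s x) t 1 /\
  derive1 (fun s => front rho eps k c a s x) t =
    k * derive1 rho (eps * x + k * t + c).
Proof.
have -> : (fun s => front rho eps k c a s x) =
    (fun s => rho (k * s + (eps * x + c)) + a).
  by apply/funext => s; rewrite /front; congr (rho _ + _); lra.
have -> : eps * x + k * t + c = k * t + (eps * x + c) by lra.
exact: derive1_affine_comp.
Qed.

Lemma nl_rhs_front eps k c a t x :
  let z := eps * x + k * t + c in
  nl_rhs mu fh (front rho eps k c a) t x =
    Rintegral mu setT (fun y => rho (z - eps * y)) - rho z + fh (rho z + a).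
Proof.
move=> z; rewrite /nl_rhs /Defs.conv /front -/z.
have -> : (fun y => rho (eps * (x - y) + k * t + c) + a) =
    (fun y => rho (z - eps * y) + a).
  by apply/funext => y; rewrite /z; congr (rho _ + _); lra.
have [B rhoB] := rho_bounded.
rewrite Rintegral_addr_cst //; last first.
  apply: (integrable_bounded_continuous mu1 measurableT (continuous_dilation rho_continuous)).
  by move=> y; exact: rhoB.
lra.
Qed.

Lemma front_subsolution eps a :
  (forall z, `|Rintegral mu setT (fun y => rho (z - eps * y)) - rho z|
    <= derive1 rho z / eps + fh (rho z + a)) ->
  subsolution mu fh (front rho eps (- eps^-1) 0 a).
Proof.
move=> dominated t x; have [front_derivable ->] := derive1_front eps (- eps^-1) 0 a t x.
split => //; rewrite nl_rhs_front /=.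
move: (dominated (eps * x + - eps^-1 * t + 0)); rewrite ler_norml => /andP[lb _].
lra.
Qed.

Lemma front_supersolution eps c a :
  (forall z, `|Rintegral mu setT (fun y => rho (z - eps * y)) - rho z|
    <= derive1 rho z / eps - fh (rho z + a)) ->
  supersolution mu fh (front rho eps eps^-1 c a).
Proof.
move=> dominated t x; have [front_derivable ->] := derive1_front eps eps^-1 c a t x.
split => //; rewrite nl_rhs_front /=.
move: (dominated (eps * x + eps^-1 * t + c)); rewrite ler_norml => /andP[_ ub].
lra.
Qed.

End TransitionProfile.

Theorem lemma12 (R : realType) (mu : {measure set R -> \bar R})
  (f fh rho : R -> R) (alpha : R) :
  mu setT = 1%E ->
  0 < alpha < 1 ->
  lipschitz_on_set `[0, 1] f ->
  f 0 = 0 -> f alpha = 0 -> f 1 = 0 ->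
  (forall x, 0 < x < alpha -> f x < 0) ->
  (forall x, alpha < x < 1 -> 0 < f x) ->
  lipschitz_on_set setT fh ->
  (forall x, x < 0 -> 0 < fh x) ->
  (forall x, 0 <= x <= 1 -> fh x = f x) ->
  (forall x, 1 < x -> fh x < 0) ->
  (forall x, derivable rho x 1) -> continuous (derive1 rho) ->
  (forall x, x <= 0 -> rho x = 0) ->
  (forall x, 1 <= x -> rho x = 1) ->
  (forall x, 0 < x < 1 -> 0 < derive1 rho x) ->
  exists eps0 : R, 0 < eps0 /\
    forall eps : R, 0 < eps -> eps < eps0 ->
      subsolution mu fh
        (fun t x => rho (eps * x - t / eps) - (1 - alpha) / 4) /\
      supersolution mu fh
        (fun t x => rho (eps * x + t / eps + 1) + alpha / 4).
Proof.
move=> mu1 /andP[alpha0 alpha1] _ _ _ _ f_neg f_pos [k fh_lip] fh_pos fh_f fh_neg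
  rho_der rho'_cont rho_le0 rho_ge1 rho'_gt0.
have fh_cont : continuous fh := lipschitz_continuous (fun x y => fh_lip x y I I).
have [rho0 rho1] : rho 0 = 0 /\ rho 1 = 1 by rewrite rho_le0 ?rho_ge1.
set a := (1 - alpha) / 4; set b := alpha / 4.
have sub0 : 0 < fh (rho 0 - a) by rewrite rho0 add0r; apply: fh_pos; rewrite /a; lra.
have sub1 : 0 < fh (rho 1 - a).
  by rewrite rho1 fh_f; [apply: f_pos|]; rewrite /a; apply/andP; split; lra.
have super0 : 0 < - fh (rho 0 + b).
  rewrite rho0 add0r oppr_gt0 fh_f.
    by apply: f_neg; rewrite /b; apply/andP; split; lra.
  by rewrite /b; apply/andP; split; lra.
have super1 : 0 < - fh (rho 1 + b) by rewrite rho1 oppr_gt0; apply: fh_neg; rewrite /b; lra.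
have [e1 e1_gt0 sub_bound] := conv_defect_le_drift rho_der rho'_cont rho_le0 rho_ge1
  rho'_gt0 mu1 (continuous_shift (c := - a) fh_cont) sub0 sub1.
have super_cont : continuous (fun v => - fh (v + b)).
  by move=> v; apply: cvgN; exact: continuous_shift.
have [e2 e2_gt0 super_bound] := conv_defect_le_drift rho_der rho'_cont rho_le0 rho_ge1
  rho'_gt0 mu1 super_cont super0 super1.
exists (Num.min e1 e2); split => [|eps eps0]; first by rewrite lt_min e1_gt0 e2_gt0.
rewrite lt_min => /andP[eps_e1 eps_e2]; split.
- have -> : (fun t x => rho (eps * x - t / eps) - a) = front rho eps (- eps^-1) 0 (- a).
    by apply/funext => t; apply/funext => x; rewrite /front; congr (rho _ + _); lra.
  by apply: front_subsolution => // z; exact: sub_bound.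
- have -> : (fun t x => rho (eps * x + t / eps + 1) + b) = front rho eps eps^-1 1 b.
    by apply/funext => t; apply/funext => x; rewrite /front; congr (rho _ + _); lra.
  by apply: front_supersolution => // z; exact: super_bound.
Qed.
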